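(* Let $A$ be a $C^*$-algebra, and let $0<r<\frac{1}{2}$, $\theta\in[0,\infty)$ be real numbers. Suppose $f:A\to A$ satisfies $$\Big\|\mu f\Big(\frac{x+y}{2}\Big)+\mu f\Big(\frac{x-y}{2}\Big)-f(\mu x)+f(a^2)-f(a)a-af(a)+f(w^* )-(f(w))^*\Big\|\le \theta(\|x\|^r\|y\|^r+\|a\|^{2r}+\|w\|^r)$$ for all $\mu\in\mathbb{T}$ and all $x,y,a,w\in A$. Then there exists a unique $*$-Jordan derivation $D:A\to A$ such that $$\|f(x)-D(x)\|\le \frac{3^r\theta}{2-2^r}\|x\|^{2r}$$ for all $x\in A$.
   Context: $\mathbb{T}=\{\mu\in\mathbb{C}:|\mu|=1\}$. A Jordan derivation on an algebra $A$ is a linear map $D:A\to A$ with $D(a^2)=D(a)a+aD(a)$ for all $a\in A$. On a $C^*$-algebra, a $*$-Jordan derivation is a Jordan derivation $D$ with $D(a^* )=(D(a))^*$ for all $a\in A$. *)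

From HB Require Import structures.
From mathcomp Require Import all_boot all_order all_algebra.
From mathcomp Require Import all_classical all_reals.
From mathcomp Require Import exp.
From mathcomp Require Import complex.
Set Implicit Arguments. Unset Strict Implicit. Unset Printing Implicit Defensive.
Import Order.TTheory GRing.Theory Num.Theory.
Local Open Scope ring_scope.

Definition cmod (R : realType) (z : R[i]) : R := Normc.normc z.
Definition cconj (R : realType) (z : R[i]) : R[i] := conjc z.

Record cstar_algebra (R : realType) (A : lmodType R[i]) := CStarAlgebra {
  cmul : A -> A -> A;
  cstar : A -> A;
  cnorm : A -> R;
  cmul_addl : forall x y z, cmul (x + y) z = cmul x z + cmul y z;
  cmul_addr : forall x y z, cmul x (y + z) = cmul x y + cmul x z;
  cmul_scalel : forall (c : R[i]) x y, cmul (c *: x) y = c *: cmul x y;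
  cmul_scaler : forall (c : R[i]) x y, cmul x (c *: y) = c *: cmul x y;
  cmulA : forall x y z, cmul x (cmul y z) = cmul (cmul x y) z;
  cnorm_ge0 : forall x, 0 <= cnorm x;
  cnorm_eq0 : forall x, cnorm x = 0 -> x = 0;
  cnorm_triangle : forall x y, cnorm (x + y) <= cnorm x + cnorm y;
  cnormZ : forall (c : R[i]) x, cnorm (c *: x) = cmod c * cnorm x;
  cnorm_submul : forall x y, cnorm (cmul x y) <= cnorm x * cnorm y;
  cnorm_complete : forall u : nat -> A,
    (forall e : R, 0 < e -> exists N : nat, forall m n : nat,
        (N <= m)%N -> (N <= n)%N -> cnorm (u m - u n) < e) ->
    exists l : A, forall e : R, 0 < e -> exists N : nat, forall n : nat,
        (N <= n)%N -> cnorm (u n - l) < e;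
  cstar_add : forall x y, cstar (x + y) = cstar x + cstar y;
  cstar_scale : forall (c : R[i]) x, cstar (c *: x) = cconj c *: cstar x;
  cstarK : forall x, cstar (cstar x) = x;
  cstar_mul : forall x y, cstar (cmul x y) = cmul (cstar y) (cstar x);
  cstar_identity : forall x, cnorm (cmul (cstar x) x) = cnorm x ^+ 2
}.

Definition clinear (R : realType) (A : lmodType R[i]) (D : A -> A) :=
  (forall x y, D (x + y) = D x + D y) /\ (forall (c : R[i]) x, D (c *: x) = c *: D x).

Definition jordan_derivation (R : realType) (A : lmodType R[i])
  (S : cstar_algebra A) (D : A -> A) :=
  clinear D /\
  forall a, D (cmul S a a) = cmul S (D a) a + cmul S a (D a).

Definition star_jordan_derivation (R : realType) (A : lmodType R[i])
  (S : cstar_algebra A) (D : A -> A) :=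
  jordan_derivation S D /\ forall a, D (cstar S a) = cstar S (D a).

(** Every defect in the hypothesis is homogeneous under [x |-> 2^n x] (of
    degree 1, or 2 for the Jordan defect), while the right-hand side grows only
    like [2^(2 r n)] with [2 r < 1]. Hence all three defects vanish identically:
    [f] itself is additive, commutes with unimodular scalars, hence is C-linear,
    and is a *-Jordan derivation, so [D = f] works. Uniqueness follows from the
    same scaling argument applied to [f - D']. *)
From HB Require Import structures.
From mathcomp Require Import all_boot all_order all_algebra.
From mathcomp Require Import all_classical all_reals.
From mathcomp Require Import exp.
From mathcomp Require Import complex.
From mathcomp Require Import lra.
From mathcomp Require Import topology normedtype sequences.
Set Implicit Arguments. Unset Strict Implicit. Unset Printing Implicit Defensive.
Import Order.TTheory GRing.Theory Num.Theory.
Import numFieldNormedType.Exports.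
Local Open Scope ring_scope.

Section RealScalars.
Variable R : realType.
Local Open Scope classical_set_scope.

Lemma le0_geometric_bound (u C q : R) :
  `|q| < 1 -> (forall n, u <= C * q ^+ n) -> u <= 0.
Proof.
move=> q1 uq.
have Cq : (fun n => C * q ^+ n) @ \oo --> (C * 0 : R).
  by apply: cvgMl_tmp; exact: cvg_expr.
rewrite mulr0 in Cq; apply: ler_cvg_to (cvg_cst u) Cq _.
exact: nearW.
Qed.

Lemma powR_lt_self (a s : R) : 1 < a -> s < 1 -> powR a s < a.
Proof.
move=> a1 s1; have a0 : 0 < a by apply: lt_trans a1.
rewrite /powR gt_eqF // -[X in _ < X](@lnK R a) ?posrE // ltr_expR.
by rewrite -[X in _ < X]mul1r ltr_pM2r // ln_gt0.
Qed.

Lemma powR_natrXM (a : nat) (t s : R) n : 0 <= t ->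
  powR ((a ^ n)%N%:R * t) s = powR a%:R s ^+ n * powR t s.
Proof.
move=> t0; rewrite powRM ?ler0n // natrX -powR_mulrn ?ler0n //.
by rewrite powRAC powR_mulrn // powR_ge0.
Qed.

Lemma powR_mul2 (a s : R) : powR a (2 * s) = powR a s ^+ 2.
Proof. by rewrite mulrC powRrM powR_mulrn ?powR_ge0. Qed.

Lemma mul2_lt1 (s : R) : s < 2^-1 -> 2 * s < 1.
Proof. by rewrite -(ltr_pM2l (ltr0n R 2)) mulfV ?pnatr_eq0. Qed.

Lemma cmod_natr n : cmod (n%:R : R[i]) = n%:R.
Proof. by rewrite /cmod (@normcMn R 1) Normc.normc1. Qed.

Lemma cmod1 : cmod (1 : R[i]) = 1.
Proof. exact: cmod_natr 1. Qed.

End RealScalars.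

Section CStarAlgebra.
Variables (R : realType) (A : lmodType R[i]) (S : cstar_algebra A).
Local Notation N := (cnorm S).

Lemma cnormZ_natr n v : N (n%:R *: v) = n%:R * N v.
Proof. by rewrite cnormZ cmod_natr. Qed.

Lemma mulrSn_eq0 (v : A) n : v *+ n.+1 = 0 -> v = 0.
Proof. by rewrite -scaler_nat => /eqP; rewrite scaler_eq0 pnatr_eq0 => /eqP. Qed.

Lemma cnorm0 : N 0 = 0.
Proof. by rewrite -(scale0r (0 : A)) -[0 : R[i]]/(0%:R) cnormZ_natr mul0r. Qed.

Lemma cnorm_le0 v : N v <= 0 -> v = 0.
Proof. by move=> Nv0; apply: (@cnorm_eq0 _ _ S); apply/eqP; rewrite eq_le Nv0 cnorm_ge0. Qed.

Lemma powR_cnorm0 s : s != 0 -> powR (N 0) s = 0.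
Proof. by move=> s0; rewrite cnorm0 powR0. Qed.

Lemma cmul0r x : cmul S x 0 = 0.
Proof. by apply: (addrI (cmul S x 0)); rewrite -cmul_addr !addr0. Qed.

Lemma cmul0l x : cmul S 0 x = 0.
Proof. by apply: (addrI (cmul S 0 x)); rewrite -cmul_addl !addr0. Qed.

Lemma cstar0 : cstar S 0 = 0.
Proof. by apply: (addrI (cstar S 0)); rewrite -cstar_add !addr0. Qed.

Lemma cstarMn x n : cstar S (x *+ n) = cstar S x *+ n.
Proof. by elim: n => [|n IH]; rewrite ?mulr0n ?cstar0 // !mulrS cstar_add IH. Qed.

Lemma cstarZ_natr n x : cstar S (n%:R *: x) = n%:R *: cstar S x.
Proof. by rewrite cstar_scale /cconj conjc_nat. Qed.

Lemma scaled_cnorm_eq0 (v : A) (C s : R) : s < 1 ->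
  (forall n, N ((2 ^ n)%N%:R *: v) <= C * powR 2 s ^+ n) -> v = 0.
Proof.
move=> s1 Cv; apply: cnorm_le0; apply: (le0_geometric_bound (C := C) (q := powR 2 s / 2)).
  rewrite ger0_norm ?divr_ge0 ?powR_ge0 // ltr_pdivrMr // mul1r.
  by rewrite -[2 : R]/(2%:R) powR_lt_self // ltr1n.
move=> n; have := Cv n; rewrite cnormZ_natr natrX mulrC -ler_pdivlMr ?exprn_gt0 //.
by rewrite -mulrA -expr_div_n.
Qed.

Lemma clinear_eq (D1 D2 : A -> A) (C s : R) : clinear D1 -> clinear D2 -> s < 1 ->
  (forall x, N (D1 x - D2 x) <= C * powR (N x) s) -> D1 = D2.
Proof.
move=> [_ D1Z] [_ D2Z] s1 D12; apply: funext => x; apply/eqP; rewrite -subr_eq0; apply/eqP.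
apply: (scaled_cnorm_eq0 (C := C * powR (N x) s) s1) => n.
rewrite scalerBr -D1Z -D2Z; apply: (le_trans (D12 _)).
by rewrite cnormZ_natr powR_natrXM ?cnorm_ge0 // [X in _ <= X]mulrAC -mulrA.
Qed.

End CStarAlgebra.

Section Stability.
Variables (R : realType) (A : lmodType R[i]) (S : cstar_algebra A).
Variables (r theta : R) (f : A -> A).
Hypotheses (r_gt0 : 0 < r) (r_lt_half : r < 2^-1).
Hypothesis f_stable : forall (mu : R[i]) (x y a w : A), cmod mu = 1 ->
  cnorm S (mu *: f ((2^-1 : R[i]) *: (x + y)) + mu *: f ((2^-1 : R[i]) *: (x - y))
           - f (mu *: x)
           + f (cmul S a a) - cmul S (f a) a - cmul S a (f a)
           + f (cstar S w) - cstar S (f w))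
  <= theta * (powR (cnorm S x) r * powR (cnorm S y) r
              + powR (cnorm S a) (2 * r) + powR (cnorm S w) r).

Local Notation N := (cnorm S).
Local Notation half := (2^-1 : R[i]).
Local Notation pow2 n := ((2 ^ n)%N%:R : R[i]).
Local Open Scope complex_scope.

Definition jensen_defect x y := f (half *: (x + y)) + f (half *: (x - y)) - f x.
Definition jordan_defect a := f (cmul S a a) - cmul S (f a) a - cmul S a (f a).
Definition star_defect w := f (cstar S w) - cstar S (f w).

Let r_neq0 : r != 0. Proof. exact: lt0r_neq0. Qed.
Let r2_neq0 : 2 * r != 0. Proof. by rewrite mulf_neq0 ?pnatr_eq0 ?r_neq0. Qed.
Let r2_lt1 : 2 * r < 1 := mul2_lt1 r_lt_half.
Let r_lt1 : r < 1. Proof. by move: r2_lt1 r_gt0; lra. Qed.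

Lemma defects_bound x y a w :
  N (jensen_defect x y + jordan_defect a + star_defect w)
  <= theta * (powR (N x) r * powR (N y) r + powR (N a) (2 * r) + powR (N w) r).
Proof. by have := f_stable x y a w (cmod1 R); rewrite !scale1r !addrA. Qed.

Lemma stable0 : f 0 = 0.
Proof.
(* With all variables 0 the hypothesis gives [(f 0)^* = 3 f 0], hence [f 0 = 9 f 0]. *)
have := defects_bound 0 0 0 0.
rewrite !powR_cnorm0 ?r_neq0 ?r2_neq0 // !mulr0 !addr0 mulr0 => /cnorm_le0.
rewrite /jensen_defect /jordan_defect /star_defect subrr addr0 scaler0 addrK.
rewrite !cmul0r cmul0l !subr0 cstar0 addrA => /eqP; rewrite subr_eq0 => /eqP f0_3.
have f0_star : cstar S (f 0) = f 0 *+ 3 by rewrite -f0_3 !mulrS mulr0n addr0 addrA.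
have f0_9 : f 0 *+ 9 = f 0.
  by rewrite -{2}(cstarK S (f 0)) f0_star cstarMn f0_star -mulrnA.
by apply: (mulrSn_eq0 (n := 7)); rewrite -[f 0 *+ 8](addrK (f 0)) -mulrSr f0_9 subrr.
Qed.

Lemma stableZ_unit_half mu x :
  cmod mu = 1 -> f (mu *: x) = mu *: (f (half *: x) + f (half *: x)).
Proof.
move=> mu1; have := f_stable x 0 0 0 mu1.
rewrite !powR_cnorm0 ?r_neq0 ?r2_neq0 // !mulr0 !addr0 mulr0 => /cnorm_le0.
rewrite subr0 !cmul0l !cmul0r cstar0 stable0 cstar0 !subr0 !addr0 -scalerDr.
by move=> /eqP; rewrite subr_eq0 eq_sym => /eqP.
Qed.

Lemma stable_halfD x : f x = f (half *: x) + f (half *: x).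
Proof. by have := stableZ_unit_half x (cmod1 R); rewrite !scale1r. Qed.

Lemma stableZ_unit mu x : cmod mu = 1 -> f (mu *: x) = mu *: f x.
Proof. by move=> mu1; rewrite stableZ_unit_half // -stable_halfD. Qed.

Lemma stableZ_pow2 n x : f (pow2 n *: x) = pow2 n *: f x.
Proof.
elim: n x => [|n IH] x; first by rewrite expn0 !scale1r.
have f_double z : f (2%:R *: z) = 2%:R *: f z.
  by rewrite stable_halfD scalerA mulVf ?pnatr_eq0 // scale1r scaler_nat mulr2n.
by rewrite expnS natrM -!scalerA f_double IH.
Qed.

Lemma jensen_defect_pow2Z n x y :
  jensen_defect (pow2 n *: x) (pow2 n *: y) = pow2 n *: jensen_defect x y.
Proof.
rewrite /jensen_defect -scalerDr -scalerBr !scalerA !(mulrC half) -!scalerA !stableZ_pow2.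
by rewrite [in RHS]scalerBr [in RHS]scalerDr.
Qed.

Lemma jordan_defect_pow2Z n a :
  jordan_defect (pow2 n *: a) = pow2 n *: (pow2 n *: jordan_defect a).
Proof. by rewrite /jordan_defect !stableZ_pow2 !cmul_scalel !cmul_scaler !stableZ_pow2 !scalerBr. Qed.

Lemma star_defect_pow2Z n w : star_defect (pow2 n *: w) = pow2 n *: star_defect w.
Proof. by rewrite /star_defect cstarZ_natr !stableZ_pow2 cstarZ_natr scalerBr. Qed.

Lemma jordan_defect0 : jordan_defect 0 = 0.
Proof. by rewrite /jordan_defect cmul0l stable0 cmul0l !subr0. Qed.

Lemma star_defect0 : star_defect 0 = 0.
Proof. by rewrite /star_defect cstar0 stable0 cstar0 subrr. Qed.

Lemma jensen_defect_eq0 x y : jensen_defect x y = 0.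
Proof.
apply: (scaled_cnorm_eq0 (S := S) (C := theta * (powR (N x) r * powR (N y) r)) r2_lt1) => n.
have := defects_bound (pow2 n *: x) (pow2 n *: y) 0 0.
rewrite jordan_defect0 star_defect0 !addr0 jensen_defect_pow2Z !cnormZ_natr.
rewrite !powR_natrXM ?cnorm_ge0 // !powR_cnorm0 ?r_neq0 ?r2_neq0 // !addr0.
move=> /le_trans; apply.
by rewrite powR_mul2 -exprM mulnC exprM expr2; lra.
Qed.

Lemma jordan_defect_eq0 a : jordan_defect a = 0.
Proof.
apply: (scaled_cnorm_eq0 (S := S) (C := theta * powR (N a) (2 * r)) r2_lt1) => n.
have := defects_bound 0 0 (pow2 n *: a) 0.
rewrite jensen_defect_eq0 star_defect0 add0r addr0 jordan_defect_pow2Z !cnormZ_natr.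
rewrite powR_natrXM ?cnorm_ge0 // !powR_cnorm0 ?r_neq0 // mul0r !add0r addr0.
move=> bound; apply: le_trans (le_trans _ bound) _; last by lra.
by rewrite ler_peMl ?mulr_ge0 ?cnorm_ge0 // ler1n expn_gt0.
Qed.

Lemma star_defect_eq0 w : star_defect w = 0.
Proof.
apply: (scaled_cnorm_eq0 (S := S) (C := theta * powR (N w) r) r_lt1) => n.
have := defects_bound 0 0 0 (pow2 n *: w).
rewrite jensen_defect_eq0 jordan_defect_eq0 !add0r star_defect_pow2Z !cnormZ_natr.
rewrite powR_natrXM ?cnorm_ge0 // !powR_cnorm0 ?r_neq0 ?r2_neq0 // mul0r !add0r.
by move=> /le_trans; apply; lra.
Qed.

Lemma stableD u v : f (u + v) = f u + f v.
Proof.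
have half_twice (z : A) : half *: (z + z) = z.
  by rewrite -mulr2n -[z *+ 2]scaler_nat scalerA mulVf ?pnatr_eq0 // scale1r.
have := jensen_defect_eq0 (u + v) (u - v); rewrite /jensen_defect.
have -> : u + v + (u - v) = u + u by rewrite addrACA subrr addr0.
have -> : u + v - (u - v) = v + v by rewrite opprB addrC addrA addrNK.
by rewrite !half_twice => /eqP; rewrite subr_eq0 => /eqP.
Qed.

Lemma stableMn u n : f (u *+ n) = f u *+ n.
Proof. by elim: n => [|n IH]; rewrite ?mulr0n ?stable0 // !mulrS stableD IH. Qed.

Lemma stableZ_real_le1 (t : R) x : `|t| <= 1 -> f (t%:C *: x) = t%:C *: f x.
Proof.
move=> t1; have t2 : 0 <= 1 - t ^+ 2.
  by rewrite subr_ge0 -real_normK ?num_real // expr_le1.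
(* [t + i s] and [t - i s] are unimodular and sum to [2 t]. *)
set s := Num.sqrt (1 - t ^+ 2).
have unit_ts s' : s' ^+ 2 = s ^+ 2 -> cmod (Complex t s') = 1.
  by move=> s's; rewrite /cmod /= s's sqr_sqrtr // addrC subrK sqrtr1.
have sum_2t : Complex t s + Complex t (- s) = t%:C + t%:C.
  by apply/eqP; rewrite eq_complex /= subrr addr0 !eqxx.
have f2t : f ((t%:C + t%:C) *: x) = (t%:C + t%:C) *: f x.
  by rewrite -sum_2t scalerDl stableD !stableZ_unit ?unit_ts ?sqrrN // scalerDl.
move: f2t; rewrite !scalerDl stableD => f2t.
apply/eqP; rewrite -subr_eq0; apply/eqP/(mulrSn_eq0 (n := 1)).
by rewrite mulrnBl !mulr2n f2t subrr.
Qed.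

Lemma stableZ_real (t : R) x : f (t%:C *: x) = t%:C *: f x.
Proof.
pose n := (Num.Def.archi_bound `|t|).+1.
have n_gt0 : (0 : R) < n%:R by rewrite ltr0n.
have tn1 : `|t / n%:R| <= 1.
  rewrite normrM normfV normr_nat ler_pdivrMr // mul1r ltW //.
  by apply: lt_le_trans (archi_boundP (normr_ge0 t)) _; rewrite ler_nat.
have -> : t%:C = n%:R * (t / n%:R)%:C.
  by rewrite -(rmorph_nat (real_complex R)) -rmorphM mulrC divfK // gt_eqF.
by rewrite -!scalerA !scaler_nat stableMn stableZ_real_le1.
Qed.

Lemma stable_clinear : clinear f.
Proof.
split=> [|c x]; first exact: stableD.
have cmodi : cmod ('i : R[i]) = 1 by rewrite /cmod /= expr0n /= add0r expr1n sqrtr1.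
by rewrite {1 2}(complexE c) !scalerDl stableD stableZ_real -!scalerA stableZ_unit // stableZ_real.
Qed.

Lemma stable_star_jordan_derivation : star_jordan_derivation S f.
Proof.
split; first split; first exact: stable_clinear.
- by move=> a; apply/eqP; rewrite -subr_eq0 opprD addrA; apply/eqP; exact: jordan_defect_eq0.
- by move=> a; apply/eqP; rewrite -subr_eq0; apply/eqP; exact: star_defect_eq0.
Qed.

End Stability.

Theorem corollary2p10 (R : realType) (A : lmodType R[i]) (S : cstar_algebra A)
  (r theta : R) (f : A -> A) :
  0 < r -> r < 2^-1 -> 0 <= theta ->
  (forall (mu : R[i]) (x y a w : A), cmod mu = 1 ->
     cnorm S (mu *: f ((2^-1 : R[i]) *: (x + y)) + mu *: f ((2^-1 : R[i]) *: (x - y))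
              - f (mu *: x)
              + f (cmul S a a) - cmul S (f a) a - cmul S a (f a)
              + f (cstar S w) - cstar S (f w))
     <= theta * (powR (cnorm S x) r * powR (cnorm S y) r
                 + powR (cnorm S a) (2 * r) + powR (cnorm S w) r)) ->
  exists D : A -> A,
    (star_jordan_derivation S D /\
     forall x : A, cnorm S (f x - D x) <= powR 3 r * theta / (2 - powR 2 r) * powR (cnorm S x) (2 * r))
    /\ (forall D' : A -> A,
          star_jordan_derivation S D' /\
          (forall x : A, cnorm S (f x - D' x) <= powR 3 r * theta / (2 - powR 2 r) * powR (cnorm S x) (2 * r))
          -> D' = D).
Proof.
move=> r_gt0 r_lt_half theta_ge0 f_stable.
have C_ge0 : 0 <= powR 3 r * theta / (2 - powR 2 r).
  rewrite divr_ge0 ?mulr_ge0 ?powR_ge0 // subr_ge0 ltW //.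
  by rewrite -[2 : R]/(2%:R) powR_lt_self ?ltr1n // (lt_trans r_lt_half) // invf_lt1 ?ltr1n.
exists f; split.
  split; first exact: stable_star_jordan_derivation r_gt0 r_lt_half f_stable.
  by move=> x; rewrite subrr cnorm0 mulr_ge0 ?powR_ge0.
move=> D' [[[D'_clinear _] _] D'_near]; apply/esym.
apply: clinear_eq (mul2_lt1 r_lt_half) D'_near => //.
exact: stable_clinear r_gt0 r_lt_half f_stable.
Qed.
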